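(* Let $n\ge1$, $\varepsilon\in D$ and $s\in D^n$, and let $\mu^{(0)},\dots,\mu^{(n)}$, $\Delta_j$, $e_j$, $j'$ be given by the recursive construction below. Then $\mu^{(n)}\in\mathrm{Min}(s)$ (so $\deg\mu^{(j)}=L_j$ for all $0\le j\le n$). Moreover: if $\Delta_n=0$ then $L_n=L_{n-1}$ and $e_n=e_{n-1}+1$; if $\Delta_n\neq0$ then (i) $L_n=\deg\mu^{(n)}=\max\{e_{n-1},0\}+L_{n-1}=n'+1-L_{n'}$, and (ii) $e_n=-|e_{n-1}|+1$.
   Context: Let $D$ be a commutative integral domain with $1\neq 0$. For $s=(s_1,\dots,s_n)\in D^n$ put $\underline{s}=s_1x^{-1}+\cdots+s_nx^{-n}\in D[x,x^{-1}]$; for a Laurent polynomial $F$, $F_k$ is the coefficient of $x^k$; $s^{(i)}=(s_1,\dots,s_i)$. A polynomial $f\in D[x]$ is an annihilator of $s$, $f\in\mathrm{Ann}(s)$, if $f=0$, or $d=\deg f\ge0$ and $(f\cdot\underline{s})_{d-j}=0$ for $d+1\le j\le n$. $\mathrm{Min}(s)$ is the set of nonzero annihilators of least degree; $L(s)$ is that degree, $L_j=L(s^{(j)})$, $L_0=0$. For nonzero $f\in D[x]$ and $t\in D^m$, $\Delta(f,t)=(f\cdot\underline{t})_{\deg f-m}$. Recursive construction (relative to a fixed $\varepsilon\in D$): put $\mu^{(-1)}=\varepsilon$, $\mu^{(0)}=1$, $\Delta_0=1$, $0'=-1$, and for $j\ge 0$ let $e_j=j+1-2\deg\mu^{(j)}$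 (so $e_0=1$). For $j=1,\dots,n$ successively define: $\Delta_j=\Delta(\mu^{(j-1)},s^{(j)})$; the index $j'=(j-1)'$ if $\Delta_j=0$ or $e_{j-1}\le 0$, and $j'=j-1$ if $\Delta_j\neq0$ and $e_{j-1}>0$; $\Delta'_j=\Delta_{(j-1)'+1}$; and $\mu^{(j)}=\mu^{(j-1)}$ if $\Delta_j=0$, otherwise $\mu^{(j)}=\Delta'_j\,x^{\max\{e_{j-1},0\}}\mu^{(j-1)}-\Delta_j\,x^{\max\{-e_{j-1},0\}}\mu^{((j-1)')}$. *)

From HB Require Import structures.
From mathcomp Require Import all_boot all_order all_algebra.
From Stdlib Require Import ClassicalEpsilon.
Set Implicit Arguments. Unset Strict Implicit. Unset Printing Implicit Defensive.
Import Order.TTheory GRing.Theory Num.Theory.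
Local Open Scope ring_scope.

Section BM.
Variable D : idomainType.

Definition deg (f : {poly D}) : nat := (size f).-1.

(* (f * s_)_k  where s_ = s_1 x^-1 + ... + s_n x^-n, s = [:: s_1; ...; s_n] *)
Definition lcoef (f : {poly D}) (s : seq D) (k : int) : D :=
  \sum_(i < size s)
     (if (0 <= k + (i.+1)%:Z) then f`_(absz (k + (i.+1)%:Z)) else 0) * s`_i.

Definition ann (f : {poly D}) (s : seq D) : Prop :=
  f = 0 \/
  (forall j : nat, (deg f < j <= size s)%N ->
     lcoef f s ((deg f)%:Z - j%:Z) = 0).

Definition isMin (f : {poly D}) (s : seq D) : Prop :=
  f != 0 /\ ann f s /\
  (forall g : {poly D}, g != 0 -> ann g s -> (deg f <= deg g)%N).

Definition hasAnnDeg (s : seq D) (d : nat) : bool :=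
  if excluded_middle_informative
       (exists f : {poly D}, f != 0 /\ ann f s /\ deg f = d)
  then true else false.

Definition Lof (s : seq D) : nat :=
  match excluded_middle_informative (exists d, hasAnnDeg s d) with
  | left H => ex_minn H
  | right _ => 0%N
  end.

Definition Delta (f : {poly D}) (t : seq D) : D :=
  lcoef f t ((deg f)%:Z - (size t)%:Z).

Definition eidx (j : nat) (m : {poly D}) : int := (j.+1)%:Z - (2 * deg m)%N%:Z.

(* state after step j: (mu^(j), j', mu^(j'), Delta_{j'+1}) *)
Fixpoint bmstate (eps : D) (s : seq D) (j : nat)
  : {poly D} * int * {poly D} * D :=
  match j with
  | 0%N => (1, (-1)%R, eps%:P, 1)
  | j1.+1 =>
    let: (m, jp, mp, dp) := bmstate eps s j1 in
    let dj := Delta m (take j1.+1 s) in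
    let e := eidx j1 m in
    if dj == 0 then (m, jp, mp, dp)
    else
      let newm := dp *: ('X^(absz (Num.max e 0)) * m)
                  - dj *: ('X^(absz (Num.max (- e) 0)) * mp) in
      if 0 < e then (newm, j1%:Z, m, dj) else (newm, jp, mp, dp)
  end.

Definition BMmu (eps : D) (s : seq D) (j : nat) : {poly D} :=
  (bmstate eps s j).1.1.1.
Definition BMjp (eps : D) (s : seq D) (j : nat) : int :=
  (bmstate eps s j).1.1.2.
Definition BMDelta (eps : D) (s : seq D) (j : nat) : D :=
  Delta (BMmu eps s j.-1) (take j s).
Definition BMe (eps : D) (s : seq D) (j : nat) : int :=
  eidx j (BMmu eps s j).

End BM.

(* The iteration keeps the invariant [bm_inv]: mu^(j) is a minimal annihilator
   of s^(j), and the stored pair (mu^(j'), Delta_(j'+1)) satisfies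
   deg mu^(j) + L_(j') = j' + 1.  If Delta_(j+1) = 0, mu^(j) still annihilates
   s^(j+1).  Otherwise the update is an annihilator of s^(j+1) of degree
   max(L_j, j + 1 - L_j), and no annihilator can do better by Massey's lemma:
   an annihilator of s^(j) that fails on s^(j+1) and any annihilator of s^(j+1)
   have degrees summing to more than j. *)

From mathcomp Require Import all_boot all_order all_algebra zify.
From Stdlib Require Import ClassicalEpsilon.
Set Implicit Arguments. Unset Strict Implicit. Unset Printing Implicit Defensive.
Import Order.TTheory GRing.Theory Num.Theory.
Local Open Scope ring_scope.

Section Annihilators.
Variable D : idomainType.
Implicit Types (f g h : {poly D}) (t : seq D) (a : D).

(* [genpoly t] is x^(size t) times the Laurent series t_ with its negative
   powers dropped, so the coefficients of f * t_ that [ann] and [Delta] look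
   at become ordinary polynomial coefficients of f * genpoly t. *)
Definition genpoly t : {poly D} := foldl (fun p a => p * 'X + a%:P) 0 t.

Lemma genpoly_rcons t a : genpoly (rcons t a) = genpoly t * 'X + a%:P.
Proof. by rewrite /genpoly foldl_rcons. Qed.

Lemma coefM_genpoly_rconsS f t a i :
  (f * genpoly (rcons t a))`_i.+1 = (f * genpoly t)`_i + f`_i.+1 * a.
Proof. by rewrite genpoly_rcons mulrDr mulrA coefD coefMX coefMC. Qed.

Lemma lcoef_genpoly f t k : lcoef f t k =
  if 0 <= k + (size t)%:Z then (f * genpoly t)`_`|k + (size t)%:Z| else 0.
Proof.
elim/last_ind: t => [|t a IH]; first by rewrite /lcoef big_ord0 mulr0 coef0 if_same.
rewrite /lcoef size_rcons big_ord_recr /=.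
under eq_bigr => i _ do rewrite nth_rcons ltn_ord.
rewrite -/(lcoef f t k) IH nth_rcons ltnn eqxx -addn1 PoszD addrA.
case: (k + (size t)%:Z) => [m|[|m]] //=.
- by rewrite addn1 coefM_genpoly_rconsS.
- by rewrite subnn genpoly_rcons mulrDr mulrA coefD coefMX coefMC add0r.
- by rewrite mul0r add0r.
Qed.

Lemma coef_gt_deg f i : (deg f < i)%N -> f`_i = 0.
Proof. by move=> lt_fi; apply/nth_default/(leq_trans (leqSpred _)). Qed.

Lemma annP f t :
  ann f t <-> forall i, (deg f <= i < size t)%N -> (f * genpoly t)`_i = 0.
Proof.
have lcoefE j : (j <= deg f + size t)%N ->
    lcoef f t ((deg f)%:Z - j%:Z) = (f * genpoly t)`_(deg f + size t - j).
  by move=> le_j; rewrite lcoef_genpoly addrAC -PoszD subzn.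
split=> [[->|Af] i /andP[le_fi lt_it]|Af]; first by rewrite mul0r coef0.
  have := Af (deg f + size t - i)%N; rewrite lcoefE; last by lia.
  rewrite (_ : deg f + size t - (deg f + size t - i) = i)%N; last by lia.
  by apply; apply/andP; split; lia.
by right=> j /andP[lt_fj le_jt]; rewrite lcoefE ?Af //; [apply/andP; split | ]; lia.
Qed.

Lemma Delta_genpoly f t : Delta f t = (f * genpoly t)`_(deg f).
Proof. by rewrite /Delta lcoef_genpoly addrAC -PoszD subzn ?leq_addl // addnK. Qed.

Lemma ann_rcons f t a : ann f (rcons t a) -> ann f t.
Proof.
rewrite !annP size_rcons => Af i /andP[le_fi lt_it].
have := Af i.+1; rewrite coefM_genpoly_rconsS (@coef_gt_deg f) ?mul0r ?addr0; last by lia.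
by apply; apply/andP; split; lia.
Qed.

Lemma coefM_genpoly_rcons_ann f t a i : ann f t -> (deg f < i <= size t)%N ->
  (f * genpoly (rcons t a))`_i = 0.
Proof.
move=> /annP Af; case: i => [|i] /andP[lt_fi le_it] //.
rewrite coefM_genpoly_rconsS (@coef_gt_deg f) ?mul0r ?addr0 ?Af //; apply/andP; split; lia.
Qed.

(* The coefficient of degree deg f + deg g of
   g * (f * P) = f * (g * P), P := genpoly (rcons t a), is lead g * Delta on
   the left but vanishes on the right when deg f + deg g <= size t. *)
Lemma Massey_deg f g t a : ann f t -> Delta f (rcons t a) != 0 ->
  g != 0 -> ann g (rcons t a) -> (size t < deg f + deg g)%N.
Proof.
move=> Af Df g_neq0 /annP Ag; rewrite ltnNge; apply/negP => le_fg_t.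
set P := genpoly (rcons t a).
have /(congr1 (fun p : {poly D} => p`_(deg f + deg g))) :
  g * (f * P) = f * (g * P) by rewrite !mulrA (mulrC g).
have lt_g : (deg g < (deg f + deg g).+1)%N by rewrite ltnS leq_addl.
rewrite !coefM (bigD1 (Ordinal lt_g)) //= addnK -Delta_genpoly.
rewrite big1 => [|u /eqP ne_ug]; last first.
  have [lt_gu|le_ug] := ltnP (deg g) u; first by rewrite coef_gt_deg ?mul0r.
  rewrite coefM_genpoly_rcons_ann ?mulr0 //.
  have {}ne_ug : nat_of_ord u != deg g by apply/eqP => eq_ug; apply: ne_ug; apply: val_inj.
  move: ne_ug le_ug (ltn_ord u); lia.
rewrite big1 => [|u _]; last first.
  have [lt_fu|le_uf] := ltnP (deg f) u; first by rewrite coef_gt_deg ?mul0r.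
  by rewrite Ag ?mulr0 // size_rcons; move: le_uf (ltn_ord u); lia.
rewrite addr0 => /eqP; apply/negP.
by rewrite mulf_neq0 // -lead_coefE lead_coef_eq0.
Qed.

Lemma isMin_rcons_Delta0 f t a :
  isMin f t -> Delta f (rcons t a) = 0 -> isMin f (rcons t a).
Proof.
move=> [f_neq0 [Af minf]] Df; split; [done | split; last first].
  by move=> g g_neq0 /ann_rcons; apply: minf.
apply/annP => i; rewrite size_rcons ltnS leq_eqVlt => /andP[/predU1P[<-|lt_fi] le_it].
  by rewrite -Delta_genpoly.
by apply: coefM_genpoly_rcons_ann; rewrite ?lt_fi.
Qed.

Lemma isMin_rcons_Delta f h t a : isMin f t -> Delta f (rcons t a) != 0 ->
  h != 0 -> ann h (rcons t a) -> deg h = maxn (deg f) ((size t).+1 - deg f) ->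
  isMin h (rcons t a).
Proof.
move=> [_ [Af minf]] Df h_neq0 Ah deg_h; do 2!split=> //.
move=> g g_neq0 Ag; have := Massey_deg Af Df g_neq0 Ag.
have := minf g g_neq0 (ann_rcons Ag); rewrite deg_h; lia.
Qed.

Lemma Lof_isMin f t : isMin f t -> Lof t = deg f.
Proof.
move=> [f_neq0 [Af minf]].
have hasAnnP d : hasAnnDeg t d <-> exists g, g != 0 /\ ann g t /\ deg g = d.
  by rewrite /hasAnnDeg; case: excluded_middle_informative.
rewrite /Lof; case: excluded_middle_informative => [?|]; last first.
  by case; exists (deg f); apply/hasAnnP; exists f.
case: ex_minnP => d /hasAnnP[g [g_neq0 [Ag <-]]] min_d.
by apply/eqP; rewrite eqn_leq minf // min_d //; apply/hasAnnP; exists f.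
Qed.

Definition bm_update (c : D) f (m : nat) (d : D) g (k : nat) : {poly D} :=
  c *: ('X^m * f) - d *: ('X^k * g).

Lemma size_bm_update c d f g m k : c != 0 -> f != 0 ->
  (k + deg g < m + deg f)%N -> size (bm_update c f m d g k) = (m + deg f).+1.
Proof.
move=> c_neq0 f_neq0 lt_gf.
have size_f : size f = (deg f).+1 by rewrite prednK // size_poly_gt0.
have size_Xf : size (c *: ('X^m * f)) = (m + deg f).+1.
  by rewrite size_scale // mulrC size_mulXn // size_f addnS.
rewrite size_polyDl size_Xf // size_polyN.
apply: leq_ltn_trans (size_scale_leq _ _) _; apply: leq_ltn_trans (size_polyMleq _ _) _.
by rewrite size_polyXn addSn ltnS (leq_trans _ lt_gf) //= -addnS leq_add2l leqSpred.
Qed.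

Lemma coefM_genpoly_take_shift g (s : seq D) k x r : (k + r <= size s)%N ->
  (deg g <= x)%N -> (g * genpoly (take (k + r) s))`_(x + r) = (g * genpoly (take k s))`_x.
Proof.
move=> le_ks le_gx; elim: r le_ks => [|r IHr] le_ks; first by rewrite !addn0.
rewrite !addnS (take_nth 0); last by rewrite -addnS.
rewrite coefM_genpoly_rconsS (@coef_gt_deg g) ?mul0r ?addr0 ?IHr //; lia.
Qed.

(* The exponents align the two discrepancies in the coefficient of degree
   deg h, where they cancel; the coefficients above it vanish because f and g
   annihilate their prefixes. *)
Lemma ann_bm_update (s : seq D) f g N k m1 m2 : (k < N < size s)%N ->
  f != 0 -> ann f (take N s) -> ann g (take k s) -> Delta g (take k.+1 s) != 0 ->
  (m1 + deg f = m2 + deg g + (N - k))%N ->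
  ann (bm_update (Delta g (take k.+1 s)) f m1 (Delta f (take N.+1 s)) g m2)
      (take N.+1 s).
Proof.
move=> /andP[lt_kN lt_Ns] f_neq0 Af Ag Dg_neq0 eq_deg.
set h := bm_update _ _ _ _ _ _.
have deg_h : deg h = (m1 + deg f)%N by rewrite /deg size_bm_update //; lia.
apply/annP => i; rewrite deg_h size_takel // => /andP[le_fi lt_iN].
move: lt_iN; have [r -> {le_fi}] : exists r, i = (m1 + deg f + r)%N.
  by exists (i - (m1 + deg f))%N; lia.
rewrite /h /bm_update mulrBl -!scalerAl -!mulrA coefB !coefZ !coefXnM.
rewrite !ifN -?leqNgt; try lia.
rewrite (_ : m1 + deg f + r - m1 = deg f + r)%N; last by lia.
rewrite (_ : m1 + deg f + r - m2 = deg g + r + (N - k))%N; last by lia.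
rewrite -[in g * _](_ : k.+1 + (N - k) = N.+1)%N; last by lia.
rewrite coefM_genpoly_take_shift ?leq_addr //; last by lia.
case: r => [_|r lt_rN].
  by rewrite !addn0 -!Delta_genpoly mulrC subrr.
rewrite !(take_nth 0) //; last exact: ltn_trans lt_kN lt_Ns.
by rewrite !coefM_genpoly_rcons_ann ?mulr0 ?subrr // size_takel; lia.
Qed.

End Annihilators.

Lemma eidxS (D : idomainType) j (m : {poly D}) : eidx j.+1 m = eidx j m + 1.
Proof. by rewrite /eidx; lia. Qed.

Lemma eidx_gt0 (D : idomainType) j (m : {poly D}) :
  (0 < eidx j m) = (2 * deg m < j.+1)%N.
Proof. by rewrite /eidx subr_gt0 ltz_nat. Qed.

Lemma eidx_maxn (D : idomainType) j (f h : {poly D}) :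
  deg h = maxn (deg f) (j.+1 - deg f) ->
  (deg h)%:Z = Num.max (eidx j f) 0 + (deg f)%:Z /\
  eidx j.+1 h = - `|eidx j f| + 1.
Proof. by rewrite /eidx => ->; split; lia. Qed.

Section BerlekampMassey.
Variables (D : idomainType) (eps : D) (s : seq D).

Lemma bmstate_Delta0 j f m g dp : bmstate eps s j = (f, m, g, dp) ->
  Delta f (take j.+1 s) = 0 -> bmstate eps s j.+1 = (f, m, g, dp).
Proof. by move=> /= -> ->; rewrite eqxx. Qed.

Lemma bmstate_pos j f m g dp : bmstate eps s j = (f, m, g, dp) ->
  Delta f (take j.+1 s) != 0 -> (2 * deg f < j.+1)%N ->
  bmstate eps s j.+1 = (bm_update dp f (j.+1 - 2 * deg f) (Delta f (take j.+1 s)) g 0,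
                        j%:Z, f, Delta f (take j.+1 s)).
Proof.
move=> /= -> /negbTE -> lt_fj; rewrite eidx_gt0 lt_fj /eidx.
by congr (bm_update _ _ _ _ _ _, _, _, _); lia.
Qed.

Lemma bmstate_npos j f m g dp : bmstate eps s j = (f, m, g, dp) ->
  Delta f (take j.+1 s) != 0 -> (j.+1 <= 2 * deg f)%N ->
  bmstate eps s j.+1 = (bm_update dp f 0 (Delta f (take j.+1 s)) g (2 * deg f - j.+1),
                        m, g, dp).
Proof.
move=> /= -> /negbTE -> le_jf; rewrite eidx_gt0 ltnNge le_jf /eidx.
by congr (bm_update _ _ _ _ _ _, _, _, _); lia.
Qed.

(* Either every discrepancy so far vanished (j' = -1), or j' = k is the last
   step at which the degree jumped. *)
Definition bm_inv j (st : {poly D} * int * {poly D} * D) : Prop :=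
  let: (f, m, g, dp) := st in
  [/\ isMin f (take j s), dp != 0 &
      (m = -1 /\ deg f = 0%N /\ deg g = 0%N) \/
      exists2 k : nat, m = k &
        [/\ (k < j)%N, (deg f + deg g)%N = k.+1, isMin g (take k s)
          & Delta g (take k.+1 s) = dp]].

Lemma bm_inv0 : bm_inv 0 (bmstate eps s 0).
Proof.
split; [split; [exact: oner_neq0 | split] | exact: oner_neq0 | left].
- by apply/annP => i; rewrite take0 andbF.
- by move=> g _ _; rewrite /deg size_poly1.
by rewrite /deg size_poly1 size_polyC; case: (eps != 0).
Qed.

Lemma isMin_take_Delta j f h : (j < size s)%N -> isMin f (take j s) ->
  Delta f (take j.+1 s) != 0 -> h != 0 -> ann h (take j.+1 s) ->
  deg h = maxn (deg f) (j.+1 - deg f) -> isMin h (take j.+1 s).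
Proof.
move=> lt_js minf; rewrite (take_nth 0 lt_js) => Df h_neq0 Ah deg_h.
by apply: isMin_rcons_Delta minf Df h_neq0 Ah _; rewrite size_takel // ltnW.
Qed.

Lemma bm_inv_Delta0 j f m g dp : (j < size s)%N ->
  bmstate eps s j = (f, m, g, dp) -> bm_inv j (f, m, g, dp) ->
  Delta f (take j.+1 s) = 0 -> bm_inv j.+1 (bmstate eps s j.+1).
Proof.
move=> lt_js E [minf dp_neq0 prev] Df; rewrite (bmstate_Delta0 E Df).
split=> //; first by rewrite (take_nth 0 lt_js) in Df *; apply: isMin_rcons_Delta0.
case: prev => [|[k -> [lt_kj *]]]; [by left | right; exists k => //].
by split=> //; apply: ltnW.
Qed.

Lemma bm_inv_pos j f m g dp : (j < size s)%N ->
  bmstate eps s j = (f, m, g, dp) -> bm_inv j (f, m, g, dp) ->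
  Delta f (take j.+1 s) != 0 -> (2 * deg f < j.+1)%N ->
  bm_inv j.+1 (bmstate eps s j.+1) /\
  deg (BMmu eps s j.+1) = maxn (deg f) (j.+1 - deg f).
Proof.
move=> lt_js E [minf dp_neq0 prev] Df lt_fj; have [f_neq0 [Af _]] := minf.
rewrite /BMmu (bmstate_pos E Df lt_fj) /=.
set h := bm_update _ _ _ _ _ _.
have size_h : size h = (j.+1 - 2 * deg f + deg f).+1.
  by rewrite size_bm_update //; case: prev => [|[k _ []]]; lia.
have deg_h : deg h = maxn (deg f) (j.+1 - deg f) by rewrite [deg h]/deg size_h /=; lia.
have Ah : ann h (take j.+1 s).
  case: prev => [[_ [degf0 _]]|[k _ [lt_kj sum_fg [_ [Ag _]] Dg]]].
    by apply/annP => i; rewrite /deg size_h size_takel // degf0; lia.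
  rewrite /h -Dg; apply: ann_bm_update; rewrite ?Dg ?lt_kj //; lia.
have h_neq0 : h != 0 by rewrite -size_poly_eq0 size_h.
have minh := isMin_take_Delta lt_js minf Df h_neq0 Ah deg_h.
split=> //; split=> //; right; exists j => //; split=> //; lia.
Qed.

Lemma bm_inv_npos j f m g dp : (j < size s)%N ->
  bmstate eps s j = (f, m, g, dp) -> bm_inv j (f, m, g, dp) ->
  Delta f (take j.+1 s) != 0 -> (j.+1 <= 2 * deg f)%N ->
  bm_inv j.+1 (bmstate eps s j.+1) /\
  deg (BMmu eps s j.+1) = maxn (deg f) (j.+1 - deg f).
Proof.
move=> lt_js E [minf dp_neq0 prev] Df le_jf; have [f_neq0 [Af _]] := minf.
have [k def_m [lt_kj sum_fg ming Dg]] : exists2 k : nat, m = k &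
    [/\ (k < j)%N, (deg f + deg g)%N = k.+1, isMin g (take k s)
      & Delta g (take k.+1 s) = dp].
  by case: prev => // -[_ [degf0 _]]; move: le_jf; rewrite degf0.
have [_ [Ag _]] := ming.
rewrite /BMmu (bmstate_npos E Df le_jf) /=.
set h := bm_update _ _ _ _ _ _.
have size_h : size h = (0 + deg f).+1 by rewrite size_bm_update //; lia.
have deg_h : deg h = maxn (deg f) (j.+1 - deg f) by rewrite [deg h]/deg size_h /=; lia.
have Ah : ann h (take j.+1 s).
  by rewrite /h -Dg; apply: ann_bm_update; rewrite ?Dg ?lt_kj //; lia.
have h_neq0 : h != 0 by rewrite -size_poly_eq0 size_h.
have minh := isMin_take_Delta lt_js minf Df h_neq0 Ah deg_h.
split=> //; split=> //; right; exists k => //; split=> //; lia.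
Qed.

Lemma bm_inv_Delta j f m g dp : (j < size s)%N ->
  bmstate eps s j = (f, m, g, dp) -> bm_inv j (f, m, g, dp) ->
  Delta f (take j.+1 s) != 0 ->
  bm_inv j.+1 (bmstate eps s j.+1) /\
  deg (BMmu eps s j.+1) = maxn (deg f) (j.+1 - deg f).
Proof.
move=> lt_js E inv Df.
have [lt_fj|le_jf] := ltnP (2 * deg f) j.+1.
  exact: bm_inv_pos lt_js E inv Df lt_fj.
exact: bm_inv_npos lt_js E inv Df le_jf.
Qed.

Lemma bm_invariant j : (j <= size s)%N -> bm_inv j (bmstate eps s j).
Proof.
elim: j => [_|j IHj lt_js]; first exact: bm_inv0.
case E: (bmstate eps s j) (IHj (ltnW lt_js)) => [[[f m] g] dp] inv.
have [Df|Df] := eqVneq (Delta f (take j.+1 s)) 0.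
  exact: bm_inv_Delta0 E inv Df.
exact: (bm_inv_Delta lt_js E inv Df).1.
Qed.

Lemma BMmu_isMin j : (j <= size s)%N -> isMin (BMmu eps s j) (take j s).
Proof. by move=> /bm_invariant; rewrite /BMmu; case: bmstate => [[[f m] g] dp] []. Qed.

Lemma BMmu_Delta0 j : BMDelta eps s j.+1 = 0 -> BMmu eps s j.+1 = BMmu eps s j.
Proof.
rewrite /BMDelta /BMmu; case E: (bmstate eps s j) => [[[f m] g] dp] Df.
by rewrite (bmstate_Delta0 E Df).
Qed.

Lemma deg_BMmu_Delta j : (j < size s)%N -> BMDelta eps s j.+1 != 0 ->
  deg (BMmu eps s j.+1) = maxn (deg (BMmu eps s j)) (j.+1 - deg (BMmu eps s j)).
Proof.
move=> lt_js; rewrite /BMDelta /=.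
case E: (bmstate eps s j) (bm_invariant (ltnW lt_js)) => [[[f m] g] dp] inv.
have -> : BMmu eps s j = f by rewrite /BMmu E.
by move=> Df; rewrite (bm_inv_Delta lt_js E inv Df).2.
Qed.

Lemma BMjp_Delta j : (j < size s)%N -> BMDelta eps s j.+1 != 0 ->
  exists k : nat, BMjp eps s j.+1 = k /\ (deg (BMmu eps s j.+1) + Lof (take k s))%N = k.+1.
Proof.
move=> lt_js Dn0; have := deg_BMmu_Delta lt_js Dn0.
have := bm_invariant lt_js; rewrite /BMjp /BMmu.
case: (bmstate eps s j.+1) => [[[h m] g] dp] /= [_ _ [[_ [-> _]]|[k -> [_ sum_hg ming _]]]].
  lia.
by exists k; rewrite (Lof_isMin ming).
Qed.

End BerlekampMassey.

Theorem mainTheorem4 (D : idomainType) (n : nat) (eps : D) (s : seq D) :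
  (1 <= n)%N -> size s = n ->
  let mu := BMmu eps s in
  let L := fun j : nat => Lof (take j s) in
  let e := BMe eps s in
  isMin (mu n) s /\
  (forall j : nat, (j <= n)%N -> deg (mu j) = L j) /\
  (BMDelta eps s n = 0 -> L n = L n.-1 /\ e n = e n.-1 + 1) /\
  (BMDelta eps s n != 0 ->
     (L n = deg (mu n) /\
      (deg (mu n))%:Z = Num.max (e n.-1) 0 + (L n.-1)%:Z /\
      (exists k : nat, BMjp eps s n = k%:Z /\
                       (L n)%:Z = k%:Z + 1 - (L k)%:Z)) /\
     e n = - `|e n.-1| + 1).
Proof.
move=> n_gt0 size_s mu L e.
have degL j : (j <= n)%N -> deg (mu j) = L j.
  by move=> le_jn; rewrite /L (Lof_isMin (@BMmu_isMin _ eps s j _)) ?size_s.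
split; first by rewrite -[s in isMin _ s]take_size size_s; apply: BMmu_isMin; rewrite size_s.
split=> //; case: n n_gt0 size_s degL => // n _ size_s degL /=.
have lt_ns : (n < size s)%N by rewrite size_s.
split=> [D0|Dn0].
  by rewrite -!degL // /e /BMe /mu (BMmu_Delta0 D0) eidxS.
have [deg_max e_step] := eidx_maxn (deg_BMmu_Delta lt_ns Dn0).
have [k [jp_k sum_k]] := BMjp_Delta lt_ns Dn0.
rewrite -!degL //; do !split=> //; exists k; split=> //; rewrite /mu /L; lia.
Qed.
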